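(* Let $C_{1/3}$ be the middle-third Cantor set and $C(1/3)=C_{1/3}\times C_{1/3}$. Then the interior of $C(1/3)+S^1$ is non-empty.
   Context: $C_{1/3}=\{\tfrac23\sum_{k\ge1}a_k 3^{-(k-1)}: a_k\in\{0,1\}\}\subset[0,1]$; $S^1$ is the Euclidean unit circle in $\mathbb{R}^2$; $X+Y=\{x+y:x\in X,y\in Y\}$. *)

From HB Require Import structures.
From mathcomp Require Import all_boot all_order all_algebra.
From mathcomp Require Import all_classical all_reals all_analysis.
Set Implicit Arguments. Unset Strict Implicit. Unset Printing Implicit Defensive.
Import Order.TTheory GRing.Theory Num.Theory.
Import numFieldNormedType.Exports.
Local Open Scope classical_set_scope.
Local Open Scope ring_scope.

(* Middle-third Cantor set: { 2/3 * sum_{k>=1} a_k 3^{-(k-1)} : a_k in {0,1} },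
   reindexed with k' = k-1 >= 0. *)
Definition cantor_third (R : realType) : set R :=
  [set x : R | exists a : nat -> bool,
      x = (2 / 3) * limn (fun n : nat => \sum_(0 <= k < n) ((a k)%:R / 3 ^+ k : R))].

Definition cantor_square (R : realType) : set (R * R) :=
  [set p | @cantor_third R p.1 /\ @cantor_third R p.2].

Definition unit_circle (R : realType) : set (R * R) :=
  [set p | p.1 ^+ 2 + p.2 ^+ 2 = 1].

Definition minkowski_sum (R : realType) (X Y : set (R * R)) : set (R * R) :=
  [set z | exists x y, X x /\ Y y /\ z = (x.1 + y.1, x.2 + y.2)].

(* Let z lie within 1/972 (in each coordinate) of z0 = (1/486, 1/486) + (-273, 136)/305;
   as 136^2 + 273^2 = 305^2, the unit circle about z0 passes through the centre of
   Q = [0, 3^-5]^2, and near Q the unit circle about z is almost a line of slope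
   273/136, close to 2: a step of slope >= 21/10 from a point inside the disc stays
   inside, a step of slope <= 19/10 from a point outside stays outside.
   Call a square straddling when the circle separates its top-left corner (inside)
   from its bottom-right corner (outside). Q is straddling, and among the four corner
   subsquares of one third the size that C(1/3) keeps inside a straddling square, one
   is again straddling. The nested squares shrink to a point c of C(1/3) with
   |z - c| = 1, so the whole neighbourhood of z0 lies in C(1/3) + S^1. *)

From mathcomp Require Import all_boot all_order all_algebra.
From mathcomp Require Import all_classical all_reals all_analysis.
From mathcomp Require Import ring lra.
Import Order.TTheory GRing.Theory Num.Theory.
Import numFieldNormedType.Exports.
Local Open Scope classical_set_scope.
Local Open Scope ring_scope.

Set Implicit Arguments.
Unset Strict Implicit.
Unset Printing Implicit Defensive.

Lemma norm_le_geometric_eq0 (R : archiRealFieldType) (t c z : R) N : `|z| < 1 ->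
  (forall n, (N <= n)%N -> `|t| <= c * z ^+ n) -> t = 0.
Proof.
move=> z_lt1 tle; have geo0 := cvg_geometric c z_lt1.
apply/normr0_eq0/eqP; rewrite eq_le normr_ge0 andbT -(cvg_lim _ geo0) //.
apply: limr_ge; first exact: cvgP geo0.
near=> n; apply: tle.
by near: n; apply: nbhs_infty_ge.
Unshelve. all: end_near.
Qed.

Section TernaryExpansions.
Variable R : realType.
Implicit Types (d : nat -> bool) (m n : nat).

Definition ternary_psum d n : R := \sum_(0 <= k < n) ((d k)%:R / 3 ^+ k).

Lemma ternary_psumS d n : ternary_psum d n.+1 = ternary_psum d n + (d n)%:R * 3 ^- n.
Proof. by rewrite /ternary_psum big_nat_recr. Qed.

Lemma ternary_psum0 d : ternary_psum d 0 = 0.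
Proof. by rewrite /ternary_psum big_geq. Qed.

Lemma ternary_psum_nondecreasing d :
  {homo ternary_psum d : m n / (m <= n)%N >-> m <= n}.
Proof.
move=> m n mn; rewrite /ternary_psum (big_cat_nat _ mn) //= lerDl.
by apply: sumr_ge0 => k _; rewrite divr_ge0 // exprn_ge0.
Qed.

Lemma ternary_psum_tail d m n :
  ternary_psum d (n + m) <= ternary_psum d n + 3 / 2 * (3 ^- n - 3 ^- (n + m)).
Proof.
elim: m => [|m IH]; first by rewrite addn0 subrr mulr0 addr0.
rewrite addnS ternary_psumS exprSr invfM.
have r_gt0 : 0 < 3 ^- (n + m) :> R by rewrite invr_gt0 exprn_gt0.
have : (d (n + m))%:R * 3 ^- (n + m) <= 3 ^- (n + m) :> R.
  by rewrite ler_piMl ?(ltW r_gt0) // lern1 leq_b1.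
lra.
Qed.

Lemma ternary_psum_le d m n : ternary_psum d m <= ternary_psum d n + 3 / 2 * 3 ^- n.
Proof.
have r_gt0 : 0 < 3 ^- n :> R by rewrite invr_gt0 exprn_gt0.
have [nm|mn] := leqP n m.
  rewrite -(subnKC nm); have := @ternary_psum_tail d (m - n) n.
  have : 0 < 3 ^- (n + (m - n)) :> R by rewrite invr_gt0 exprn_gt0.
  lra.
have := ternary_psum_nondecreasing d (ltnW mn); lra.
Qed.

Lemma ternary_psum_cvg d : cvgn (ternary_psum d).
Proof.
apply: nondecreasing_is_cvgn; first exact: ternary_psum_nondecreasing.
exists (3 / 2) => _ [m _ <-].
by have := @ternary_psum_le d m 0; rewrite ternary_psum0 expr0 invr1 mulr1 add0r.
Qed.

Lemma ternary_lim_bounds d n :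
  ternary_psum d n <= limn (ternary_psum d) <= ternary_psum d n + 3 / 2 * 3 ^- n.
Proof.
apply/andP; split.
  exact: nondecreasing_cvgn_le (@ternary_psum_nondecreasing d) (@ternary_psum_cvg d) n.
apply: limr_le; first exact: ternary_psum_cvg.
by apply: nearW => m; apply: ternary_psum_le.
Qed.

End TernaryExpansions.

Arguments ternary_psum {R} d n.

Lemma cone_dot_le0 (R : realFieldType) (s h k al be : R) :
  0 <= h -> be < 0 -> al <= s * - be -> s * h <= k -> h * al + k * be <= 0.
Proof.
move=> h_ge0 be_lt0 al_le hk.
have : h * al <= h * (s * - be) by rewrite ler_wpM2l.
have : k * be <= (s * h) * be by rewrite ler_wnM2r // ltW.
lra.
Qed.

Lemma cone_dot_ge0 (R : realFieldType) (s h k al be : R) :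
  0 <= h -> be < 0 -> s * - be <= al -> k <= s * h -> 0 <= h * al + k * be.
Proof.
move=> h_ge0 be_lt0 al_ge hk.
have : h * (s * - be) <= h * al by rewrite ler_wpM2l.
have : (s * h) * be <= k * be by rewrite ler_wnM2r // ltW.
lra.
Qed.

Definition near_z0 {R : realType} (x y : R) : Prop :=
  [/\ 1/486 - 273/305 - 1/972 <= x, x <= 1/486 - 273/305 + 1/972,
      1/486 + 136/305 - 1/972 <= y & y <= 1/486 + 136/305 + 1/972].

Section CircleNearSquare.
Variables (R : realType) (x y : R).
Hypothesis xy_near_z0 : near_z0 x y.

Definition circle_power (u v : R) : R := (u - x) ^+ 2 + (v - y) ^+ 2 - 1.

Lemma circle_powerB u v u' v' : circle_power u' v' - circle_power u v =
  (u' - u) * ((u - x) + (u' - x)) + (v' - v) * ((v - y) + (v' - y)).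
Proof. by rewrite /circle_power; ring. Qed.

Definition probe_point (u v : R) : Prop :=
  [/\ 0 <= u, u <= 1/243, -(2/243) <= v & v <= 1/243].

Definition short_step (u v u' v' : R) : Prop :=
  [/\ 0 <= u' - u, u' - u <= 1/243, 0 <= v' - v & v' - v <= 2/243].

Lemma chord_slope u v u' v' : probe_point u v -> short_step u v u' v' ->
  [/\ (v - y) + (v' - y) < 0,
      19/10 * - ((v - y) + (v' - y)) <= (u - x) + (u' - x)
    & (u - x) + (u' - x) <= 21/10 * - ((v - y) + (v' - y))].
Proof. by case: xy_near_z0 => ? ? ? ? [? ? ? ?] [? ? ? ?]; do ?split; lra. Qed.

Lemma steep_step_in_disc u v u' v' : circle_power u v <= 0 ->
  probe_point u v -> short_step u v u' v' -> 21/10 * (u' - u) <= v' - v ->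
  circle_power u' v' <= 0.
Proof.
move=> F_le0 P S steep; have [h_ge0 _ _ _] := S.
have [be_lt0 _ al_le] := chord_slope P S.
have := cone_dot_le0 h_ge0 be_lt0 al_le steep.
have := circle_powerB u v u' v'; lra.
Qed.

Lemma flat_step_out_disc u v u' v' : 0 <= circle_power u v ->
  probe_point u v -> short_step u v u' v' -> v' - v <= 19/10 * (u' - u) ->
  0 <= circle_power u' v'.
Proof.
move=> F_ge0 P S flat; have [h_ge0 _ _ _] := S.
have [be_lt0 al_ge _] := chord_slope P S.
have := cone_dot_ge0 h_ge0 be_lt0 al_ge flat.
have := circle_powerB u v u' v'; lra.
Qed.

Definition straddles (a b r : R) : Prop :=
  [/\ 0 <= a, 0 <= b, a + r <= 1/243, b + r <= 1/243 &
      circle_power a (b + r) <= 0 /\ 0 <= circle_power (a + r) b].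

(* The probes P0 = (a, b + r), P1 = (a, b + r/3), P2 = (a, b - r/2),
   P3 = (a, b - 17r/15) and P4 = (a + r, b) start inside the disc and end outside;
   at the first sign change P_i -> P_(i+1) the i-th subsquare is kept, whose top-left
   corner is a steep step from P_i and bottom-right corner a flat step from P_(i+1). *)
Definition next_digits (a b r : R) : bool * bool :=
  if 0 < circle_power a (b + r / 3) then (false, true)
  else if 0 < circle_power a (b - r / 2) then (false, false)
  else if 0 < circle_power a (b - 17 * r / 15) then (true, true)
  else (true, false).

Lemma straddles_next a b r : 0 < r -> straddles a b r ->
  straddles (a + (next_digits a b r).1%:R * (2/3 * r))
            (b + (next_digits a b r).2%:R * (2/3 * r)) (r / 3).
Proof.
move=> r_gt0 [a_ge0 b_ge0 ar_le br_le [in0 out4]]; rewrite /next_digits.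
case: (ltP 0 (circle_power a (b + r / 3))) => [out1|in1].
  rewrite /= mul0r mul1r addr0; split; [lra.. | split].
  - by apply: (steep_step_in_disc in0); do ?split; lra.
  - by apply: (flat_step_out_disc (ltW out1)); do ?split; lra.
case: (ltP 0 (circle_power a (b - r / 2))) => [out2|in2].
  rewrite /= !mul0r !addr0; split; [lra.. | split].
  - by apply: (steep_step_in_disc in1); do ?split; lra.
  - by apply: (flat_step_out_disc (ltW out2)); do ?split; lra.
case: (ltP 0 (circle_power a (b - 17 * r / 15))) => [out3|in3].
  rewrite /= !mul1r; split; [lra.. | split].
  - by apply: (steep_step_in_disc in2); do ?split; lra.
  - by apply: (flat_step_out_disc (ltW out3)); do ?split; lra.
rewrite /= mul0r mul1r addr0; split; [lra.. | split].
- by apply: (steep_step_in_disc in3); do ?split; lra.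
- by apply: (flat_step_out_disc out4); do ?split; lra.
Qed.

Lemma straddles_init : straddles 0 0 (1/243).
Proof.
case: xy_near_z0 => *; split; [lra.. | rewrite /circle_power; split; nra].
Qed.

Lemma circle_power_le_shift u v u' v' r :
  0 <= u <= 1/243 -> 0 <= v <= 1/243 -> 0 <= u' <= 1/243 -> 0 <= v' <= 1/243 ->
  `|u' - u| <= r -> `|v' - v| <= r -> circle_power u' v' <= circle_power u v + 4 * r.
Proof.
move=> /andP[? ?] /andP[? ?] /andP[? ?] /andP[? ?] /ler_normlP[? ?] /ler_normlP[? ?].
case: xy_near_z0 => *; have := circle_powerB u v u' v'; nra.
Qed.

(* Digits of index < 5 vanish: the construction starts from [0, 3^-5]^2. *)
Definition digits_at (n : nat) (p : R * R) : bool * bool :=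
  if (n < 5)%N then (false, false) else next_digits p.1 p.2 (3 ^- n).

Fixpoint corner (n : nat) : R * R :=
  if n is m.+1 then
    let p := corner m in
    (p.1 + (digits_at m p).1%:R * (2/3 * 3 ^- m),
     p.2 + (digits_at m p).2%:R * (2/3 * 3 ^- m))
  else (0, 0).

Definition digits (n : nat) : bool * bool := digits_at n (corner n).

Lemma corner_ternary n : corner n =
  (2/3 * ternary_psum (fun k => (digits k).1) n,
   2/3 * ternary_psum (fun k => (digits k).2) n).
Proof.
elim: n => [|n IH]; first by rewrite !ternary_psum0 mulr0.
have -> : corner n.+1 = ((corner n).1 + (digits n).1%:R * (2/3 * 3 ^- n),
                         (corner n).2 + (digits n).2%:R * (2/3 * 3 ^- n)) by [].
by rewrite IH !ternary_psumS /=; congr (_, _); ring.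
Qed.

Lemma straddles_norm_le a b r u v : straddles a b r ->
  a <= u <= a + r -> b <= v <= b + r -> `|circle_power u v| <= 4 * r.
Proof.
move=> [a_ge0 b_ge0 ar_le br_le [in_tl out_br]] /andP[au ua] /andP[bv vb].
rewrite ler_norml; apply/andP; split.
  have : circle_power (a + r) b <= circle_power u v + 4 * r.
    by apply: circle_power_le_shift; rewrite ?ler_norml; do ?[apply/andP; split]; lra.
  lra.
have : circle_power u v <= circle_power a (b + r) + 4 * r.
  by apply: circle_power_le_shift; rewrite ?ler_norml; do ?[apply/andP; split]; lra.
lra.
Qed.

Lemma corner5 : corner 5 = (0, 0).
Proof. by rewrite /= !mul0r !addr0. Qed.

Lemma straddles_corner n : (5 <= n)%N -> straddles (corner n).1 (corner n).2 (3 ^- n).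
Proof.
elim: n => // n IH; rewrite leq_eqVlt => /predU1P[<-|n_ge5].
  have -> : 3 ^- 5 = 1/243 :> R by rewrite div1r -natrX.
  by rewrite corner5; exact: straddles_init.
rewrite exprSr invfM /= /digits_at ltnNge -ltnS n_ge5 /=.
by apply: straddles_next; [rewrite invr_gt0 exprn_gt0 | exact: IH].
Qed.

Lemma cantor_point_on_circle :
  exists c1 c2, cantor_third c1 /\ cantor_third c2 /\ circle_power c1 c2 = 0.
Proof.
pose d1 k := (digits k).1; pose d2 k := (digits k).2.
exists (2/3 * limn (ternary_psum d1)), (2/3 * limn (ternary_psum d2)).
split; first by exists d1.
split; first by exists d2.
have third_lt1 : `|3^-1 : R| < 1 by rewrite gtr0_norm ?invr_gt0 // invf_lt1 // ltr1n.
apply: (norm_le_geometric_eq0 (c := 4) (N := 5) third_lt1) => n n_ge5.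
rewrite exprVn; apply: (straddles_norm_le (straddles_corner n_ge5));
  rewrite corner_ternary /=.
- by have /andP[? ?] := @ternary_lim_bounds R d1 n; apply/andP; split; lra.
- by have /andP[? ?] := @ternary_lim_bounds R d2 n; apply/andP; split; lra.
Qed.

End CircleNearSquare.

Theorem mainTheorem4 (R : realType) :
  (interior (minkowski_sum (@cantor_square R) (@unit_circle R)) != set0)%classic.
Proof.
apply/set0P; exists ((1/486 - 273/305 : R), (1/486 + 136/305 : R)).
apply/nbhs_ballP; exists (1/972 : R) => /=; first lra.
move=> [x y] [/= /ltr_normlP[? ?] /ltr_normlP[? ?]].
have [|c1 [c2 [C1 [C2 on_circle]]]] := @cantor_point_on_circle R x y.
  by split; lra.
exists (c1, c2), (x - c1, y - c2); split; first by split.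
split; last by rewrite /= !subrKC.
by move: on_circle; rewrite /circle_power /unit_circle /= -!(sqrrN (_ - _)) !opprB; lra.
Qed.
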